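(* Let $0\to N\to G\xrightarrow{p} Q\to 1$ be a short exact sequence of groups with $N$ abelian (written additively), and let $C_G(N)$ be the centralizer of $N$ in $G$, a $Q$-group via $p(x)\cdot g=x+g-x$. Let $End^N(G)$ be the set of endomorphisms $\alpha$ of $G$ with $\alpha|_N=\mathrm{id}_N$. Then there is a bijection $End^N(G)\to Z^1(Q,C_G(N))$ sending $\alpha$ to the map $\psi$ determined by $\alpha(x)=\psi(p(x))+x$ for $x\in G$.
   Context: For a group $Q$ acting on a (not necessarily abelian) group $U$, $Z^1(Q,U)$ is the set of crossed homomorphisms $\psi:Q\to U$, i.e. $\psi(x+y)=\psi(x)+x\cdot\psi(y)$. *)

(* general (possibly infinite, non-abelian) groups as an
   explicit record, written additively as in the paper. *)
Set Implicit Arguments.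

Record Grp := Grp_ {
  carrier :> Type;
  gadd : carrier -> carrier -> carrier;
  gzero : carrier;
  gopp : carrier -> carrier;
  gaddA : forall x y z, gadd x (gadd y z) = gadd (gadd x y) z;
  gadd0l : forall x, gadd gzero x = x;
  gaddNl : forall x, gadd (gopp x) x = gzero
}.

Arguments gadd {g}.
Arguments gzero {g}.
Arguments gopp {g}.

Declare Scope grp_scope.
Delimit Scope grp_scope with G.
Notation "x + y" := (gadd x y) : grp_scope.
Notation "- x" := (gopp x) : grp_scope.
Notation "x - y" := (gadd x (gopp y)) : grp_scope.
Notation "0" := gzero : grp_scope.
Local Open Scope grp_scope.

Definition is_hom {G H : Grp} (f : G -> H) : Prop :=
  forall x y : G, f (x + y) = f x + f y.

Definition short_exact {N G Q : Grp} (i : N -> G) (p : G -> Q) : Prop :=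
  is_hom i /\ (forall a b, i a = i b -> a = b) /\
  is_hom p /\ (forall q : Q, exists x : G, p x = q) /\
  (forall g : G, p g = 0 <-> exists n : N, i n = g).

Definition abelian (N : Grp) : Prop := forall a b : N, a + b = b + a.

Definition in_centralizer {N G : Grp} (i : N -> G) (g : G) : Prop :=
  forall n : N, g + i n = i n + g.

Definition EndN {N G : Grp} (i : N -> G) : Type :=
  { a : G -> G | is_hom a /\ forall n : N, a (i n) = i n }.

(* crossed homomorphism condition psi(q+q') = psi(q) + q.psi(q'), where the
   Q-action on C_G(N) is p(x).g = x + g - x; since p is surjective, we
   quantify over preimages x, y of q, q'. *)
Definition crossed_hom {G Q : Grp} (p : G -> Q) (psi : Q -> G) : Prop :=
  forall x y : G, psi (p x + p y) = psi (p x) + (x + psi (p y) - x).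

Definition Z1 {N G Q : Grp} (i : N -> G) (p : G -> Q) : Type :=
  { psi : Q -> G | (forall q : Q, in_centralizer i (psi q)) /\ crossed_hom p psi }.

Definition bijective_map {A B : Type} (F : A -> B) : Prop :=
  (forall a b, F a = F b -> a = b) /\ (forall z, exists a, F a = z).

(* An endomorphism a fixing N pointwise is the same thing as its defect
   x |-> a x - x.  Since a fixes N, the defect is constant on the cosets of N,
   i.e. it factors through p, and conjugating N by x and by a x has the same
   effect, so the defect centralizes N.  The homomorphism law for a is exactly
   the cocycle law for the defect under the conjugation action.  Conversely a
   crossed homomorphism psi gives back the endomorphism x |-> psi (p x) + x. *)

From Stdlib Require Import ClassicalEpsilon FunctionalExtensionality ProofIrrelevance.
Local Open Scope grp_scope.
Arguments gaddA {g}. Arguments gadd0l {g}. Arguments gaddNl {g}.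

Section GroupTheory.
Variable G : Grp.
Implicit Types x y z : G.

Lemma addIl x y z : x + y = x + z -> y = z.
Proof.
  intro E. rewrite <- (gadd0l y), <- (gaddNl x), <- gaddA, E.
  rewrite gaddA, gaddNl. apply gadd0l.
Qed.

Lemma addNr x : x + - x = 0.
Proof.
  rewrite <- (gadd0l (x + - x)), <- (gaddNl (- x)) at 1.
  rewrite <- gaddA, (gaddA (- x) x), gaddNl, gadd0l. apply gaddNl.
Qed.

Lemma addr0 x : x + 0 = x.
Proof. rewrite <- (gaddNl x), gaddA, addNr. apply gadd0l. Qed.

Lemma oppr0 : - (0 : G) = 0.
Proof. rewrite <- (gadd0l (- 0)). apply addNr. Qed.

Lemma addNKl x y : x + (- x + y) = y.
Proof. rewrite gaddA, addNr. apply gadd0l. Qed.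

Lemma addrK x y : y + x - x = y.
Proof. rewrite <- gaddA, addNr. apply addr0. Qed.

Lemma addrNK x y : y - x + x = y.
Proof. rewrite <- gaddA, gaddNl. apply addr0. Qed.

Lemma oppD x y : - (x + y) = - y + - x.
Proof.
  apply (addIl (x + y)). rewrite addNr, <- gaddA, (gaddA y), addNr, gadd0l.
  symmetry; apply addNr.
Qed.

End GroupTheory.

Arguments addIl {G}. Arguments addNr {G}. Arguments addr0 {G}.
Arguments oppr0 {G}. Arguments addNKl {G}. Arguments addrK {G}.
Arguments addrNK {G}. Arguments oppD {G}.

Lemma hom0 (G H : Grp) (f : G -> H) : is_hom f -> f 0 = 0.
Proof. intro Hf. apply (addIl (f 0)). rewrite <- Hf, !addr0. reflexivity. Qed.

Arguments hom0 {G H f}.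

Lemma homN (G H : Grp) (f : G -> H) (x : G) : is_hom f -> f (- x) = - f x.
Proof.
  intro Hf. apply (addIl (f x)). rewrite <- Hf, !addNr. exact (hom0 Hf).
Qed.

Arguments homN {G H f}.

Definition defect {G : Grp} (a : G -> G) (x : G) : G := a x - x.

Lemma defect_hom (G : Grp) (a : G -> G) (x y : G) : is_hom a ->
  defect a (x + y) = defect a x + (x + defect a y - x).
Proof.
  intro Ha. unfold defect. rewrite Ha, oppD, !gaddA, addrNK. reflexivity.
Qed.

Lemma crossed_hom0 (G Q : Grp) (p : G -> Q) (psi : Q -> G) :
  is_hom p -> crossed_hom p psi -> psi 0 = 0.
Proof.
  intros Hp Hpsi. specialize (Hpsi 0 0).
  rewrite (hom0 Hp), gadd0l, gadd0l, oppr0, addr0 in Hpsi.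
  symmetry. apply (addIl (psi 0)). rewrite addr0. exact Hpsi.
Qed.

Arguments crossed_hom0 {G Q p psi}.

Section Extension.
Variables (N G Q : Grp) (i : N -> G) (p : G -> Q).
Hypotheses (hom_p : is_hom p)
  (ker_p : forall g : G, p g = 0 <-> exists n : N, i n = g).

Lemma p_i (n : N) : p (i n) = 0.
Proof. apply ker_p. eauto. Qed.

Section Endomorphism.
Variable a : G -> G.
Hypotheses (hom_a : is_hom a) (a_fixN : forall n : N, a (i n) = i n).

Lemma defect_fiber (x y : G) : p x = p y -> defect a x = defect a y.
Proof.
  intro Exy.
  assert (Ek : p (- x + y) = 0) by (rewrite hom_p, homN, Exy by exact hom_p; apply gaddNl).
  apply ker_p in Ek as [n En].
  assert (Ey : y = x + i n) by (rewrite En; symmetry; apply addNKl).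
  unfold defect. rewrite Ey, hom_a, a_fixN, oppD, gaddA, addrK. reflexivity.
Qed.

Lemma defect_centralizes (x : G) : in_centralizer i (defect a x).
Proof.
  intro n.
  assert (Ek : p (- x + (i n + x)) = 0).
  { rewrite !hom_p, p_i, gadd0l, homN by exact hom_p. apply gaddNl. }
  apply ker_p in Ek as [m Em].
  (* a fixes the conjugate - x + (i n + x), which lies in N *)
  assert (Econj : - a x + (i n + a x) = - x + (i n + x)).
  { rewrite <- Em, <- (a_fixN m), Em, !hom_a, a_fixN, homN by exact hom_a.
    reflexivity. }
  unfold defect. rewrite (gaddA (i n)).
  rewrite <- (addNKl (a x) (i n + a x)).
  rewrite Econj, !gaddA, addrK. reflexivity.
Qed.

End Endomorphism.

Section Cocycle.
Variable psi : Q -> G.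
Hypothesis psi_crossed : crossed_hom p psi.

Lemma crossed_endo_hom : is_hom (fun x => psi (p x) + x).
Proof. intros x y. rewrite hom_p, psi_crossed, !gaddA, addrNK. reflexivity. Qed.

Lemma crossed_endo_fixN (n : N) : psi (p (i n)) + i n = i n.
Proof. rewrite p_i, (crossed_hom0 hom_p psi_crossed). apply gadd0l. Qed.

End Cocycle.

Variables (s : Q -> G) (sK : forall q : Q, p (s q) = q).

Lemma defect_section (a : G -> G) (x : G) : is_hom a ->
  (forall n : N, a (i n) = i n) -> defect a (s (p x)) = defect a x.
Proof. intros Ha Hfix. apply defect_fiber; auto. Qed.

Lemma defect_section_crossed (a : G -> G) : is_hom a ->
  (forall n : N, a (i n) = i n) -> crossed_hom p (fun q => defect a (s q)).
Proof.
  intros Ha Hfix x y. rewrite <- hom_p, !defect_section by assumption.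
  apply defect_hom, Ha.
Qed.

Definition endo_cocycle (a : EndN i) : Z1 i p :=
  let (f, Hf) := a in
  exist _ (fun q => defect f (s q))
    (conj (fun q => defect_centralizes f (proj1 Hf) (proj2 Hf) (s q))
          (defect_section_crossed f (proj1 Hf) (proj2 Hf))).

Definition cocycle_endo (psi : Z1 i p) : EndN i :=
  let (f, Hf) := psi in
  exist _ (fun x => f (p x) + x)
    (conj (crossed_endo_hom f (proj2 Hf)) (crossed_endo_fixN f (proj2 Hf))).

Lemma endo_cocycleE (a : EndN i) (x : G) :
  proj1_sig a x = proj1_sig (endo_cocycle a) (p x) + x.
Proof.
  destruct a as [f [Hf Hfix]]; simpl.
  rewrite defect_section by assumption. symmetry. apply addrNK.
Qed.

Lemma endo_cocycle_inj (a b : EndN i) : endo_cocycle a = endo_cocycle b -> a = b.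
Proof.
  intro E. apply eq_sig_hprop; [intros; apply proof_irrelevance|].
  apply functional_extensionality. intro x.
  rewrite !endo_cocycleE, E. reflexivity.
Qed.

Lemma cocycle_endoK (psi : Z1 i p) : endo_cocycle (cocycle_endo psi) = psi.
Proof.
  apply eq_sig_hprop; [intros; apply proof_irrelevance|].
  destruct psi as [f Hf]; simpl.
  apply functional_extensionality. intro q.
  unfold defect. rewrite addrK, sK. reflexivity.
Qed.

End Extension.

Arguments endo_cocycle {N G Q i p} hom_p ker_p {s} sK.
Arguments cocycle_endo {N G Q i p} hom_p ker_p.

Theorem lemma15 (N G Q : Grp) (i : N -> G) (p : G -> Q)
  (Hses : short_exact i p) (HN : abelian N) :
  exists F : EndN i -> Z1 i p,
    bijective_map F /\
    forall (a : EndN i) (x : G), proj1_sig a x = proj1_sig (F a) (p x) + x.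
Proof.
  destruct Hses as [_ [_ [hom_p [p_surj ker_p]]]].
  destruct (choice (fun q x => p x = q) p_surj) as [s sK].
  exists (endo_cocycle hom_p ker_p sK).
  split; [split|].
  - apply endo_cocycle_inj.
  - intro psi. exists (cocycle_endo hom_p ker_p psi). apply cocycle_endoK.
  - apply endo_cocycleE.
Qed.
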